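(* Let $E/F$ be an unramified quadratic extension of nonarchimedean local fields of characteristic $0$ and $\beta\in\mathrm{GL}_n(E)$ skew-Hermitian. Let $\gamma\in\mathrm{GL}_n(E)$ be normal and Kottwitz with $\bar\gamma\gamma$ regular semisimple, and let $\zeta\in\mathrm{GL}_n(E)$ be Kottwitz with respect to $\beta$. Then: (1) if $g\in\mathrm{GL}_n(E)$ and $g^{-1}\bar\gamma\gamma g\in\mathrm{GL}_n(\mathcal{O}_E)$, then $g^{-1}\gamma g\in\mathrm{GL}_n(\mathcal{O}_E)$; (2) if $g\in\mathrm{GL}_n(E)$ and $g^{-1}\gamma\bar g\in\mathrm{GL}_n(\mathcal{O}_E)$, then $g\in\mathrm{GL}_n(F)\mathrm{GL}_n(\mathcal{O}_E)$; (3) if $h\in\mathrm{U}_n^\beta(F)$ and $h^{-1}(\beta^{-1}\zeta^*\beta\zeta)h\in\mathrm{GL}_n(\mathcal{O}_E)$, then $h^{-1}\zeta h\in\mathrm{GL}_n(\mathcal{O}_E)$.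
   Context: $x\mapsto\bar x$ is the nontrivial automorphism of $E/F$ (applied entrywise), $g^*={}^t\bar g$; skew-Hermitian means $\beta^*=-\beta$, and $\mathrm{U}_n^\beta(F)=\{h\in\mathrm{GL}_n(E):h^*\beta h=\beta\}$. $\gamma$ is normal if $\bar\gamma\gamma\in\mathrm{GL}_n(F)$. $\gamma$ is Kottwitz if either $\gamma=c_{n-1}(\bar\gamma\gamma)^{n-1}+\dots+c_0$ for some $c_i\in\mathcal{O}_E$, or there is no $g\in\mathrm{GL}_n(E)$ with $g^{-1}\bar\gamma\gamma g\in\mathrm{GL}_n(\mathcal{O}_E)$. $\zeta$ is Kottwitz with respect to $\beta$ if either $\zeta=c_{n-1}(\beta^{-1}\zeta^*\beta\zeta)^{n-1}+\dots+c_0$ for some $c_i\in\mathcal{O}_E$, or there is no $h\in\mathrm{U}_n^\beta(F)$ with $h^{-1}(\beta^{-1}\zeta^*\beta\zeta)h\in\mathrm{GL}_n(\mathcal{O}_E)$. *)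

From HB Require Import structures.
From mathcomp Require Import all_boot all_order all_algebra all_field.
Set Implicit Arguments. Unset Strict Implicit. Unset Printing Implicit Defensive.
Import Order.TTheory GRing.Theory Num.Theory.
Local Open Scope ring_scope.

(* A field E with a (normalized, discrete) valuation v : E^x -> Z; v 0 is
   irrelevant (junk).  [vge v N x] means "x = 0 or v x >= N". *)
Definition vge (E : fieldType) (v : E -> int) (N : int) (x : E) : bool :=
  (x == 0) || (N <= v x).

Definition intO (E : fieldType) (v : E -> int) (x : E) : bool := vge v 0 x.

(* E is a nonarchimedean local field of characteristic 0 (complete w.r.t. the
   discrete valuation v, finite residue field), sigma is an automorphism of
   order 2 of E (so E/F is quadratic with F = fixed field of sigma), and the
   extension E/F is unramified: F contains a uniformizer of E. *)
Definition unram_quad_local (E : fieldType) (sigma : {rmorphism E -> E})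
    (v : E -> int) : Prop :=
  [/\
      [pchar E] =i pred0,
      (forall x y, x != 0 -> y != 0 -> v (x * y) = v x + v y),
      (forall x y, x != 0 -> y != 0 -> x + y != 0 ->
         (v x <= v (x + y)) || (v y <= v (x + y))),
      (forall u : nat -> E,
         (forall N : int, exists M : nat, forall m k : nat,
            (M <= m)%N -> (M <= k)%N -> vge v N (u m - u k)) ->
         exists l : E, forall N : int, exists M : nat, forall m : nat,
            (M <= m)%N -> vge v N (u m - l)) &
      (exists s : seq E, forall x, intO v x ->
         exists2 y, y \in s & intO v y && vge v 1 (x - y))] /\
   [/\
      (forall x, sigma (sigma x) = x),
      (exists x, sigma x != x),
      (forall x, v (sigma x) = v x) &
      (exists pi : E, [/\ pi != 0, v pi = 1 & sigma pi = pi])].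

Section Mx.
Variables (E : fieldType) (sigma : {rmorphism E -> E}) (v : E -> int) (n : nat).

Definition mxbar (A : 'M[E]_n) : 'M[E]_n := map_mx sigma A.
Definition mxadj (A : 'M[E]_n) : 'M[E]_n := (map_mx sigma A)^T.

Definition mxO (A : 'M[E]_n) : bool := [forall i, forall j, intO v (A i j)].

Definition GLO (A : 'M[E]_n) : bool :=
  [&& A \in unitmx, mxO A & mxO (invmx A)].

Definition GLF (A : 'M[E]_n) : bool := (A \in unitmx) && (mxbar A == A).

Definition mxpow (A : 'M[E]_n) (i : nat) : 'M[E]_n := iter i (mulmx A) 1%:M.

Definition normal_mx (g : 'M[E]_n) : Prop := GLF (mxbar g *m g).

Definition regular_semisimple (A : 'M[E]_n) : Prop :=
  separable_poly (char_poly A).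

Definition kottwitz (g : 'M[E]_n) : Prop :=
  let M := mxbar g *m g in
  (exists c : 'I_n -> E, (forall i, intO v (c i)) /\
       g = \sum_(i < n) c i *: mxpow M i)
  \/ ~ (exists h : 'M[E]_n, h \in unitmx /\ GLO (invmx h *m M *m h)).

Definition unitary_grp (beta h : 'M[E]_n) : bool :=
  (h \in unitmx) && (mxadj h *m beta *m h == beta).

Definition kottwitz_wrt (beta z : 'M[E]_n) : Prop :=
  let M := invmx beta *m mxadj z *m beta *m z in
  (exists c : 'I_n -> E, (forall i, intO v (c i)) /\
       z = \sum_(i < n) c i *: mxpow M i)
  \/ ~ (exists h : 'M[E]_n, unitary_grp beta h /\ GLO (invmx h *m M *m h)).

End Mx.

From HB Require Import structures.
From mathcomp Require Import all_boot all_order all_algebra all_field.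
From mathcomp Require Import zify ring.
From Stdlib Require Import Classical_Prop.
Import Order.TTheory GRing.Theory Num.Theory.
Set Implicit Arguments. Unset Strict Implicit. Unset Printing Implicit Defensive.
Local Open Scope ring_scope.

(* Parts (1) and (3) follow from the Kottwitz condition: the conjugate of gamma
   (resp. zeta) is an O_E-polynomial in the integral conjugate of gammabar gamma
   (resp. beta^-1 zeta^* beta zeta), and its determinant is a unit because the
   determinant of the latter is the norm sigma(d) d of d = det gamma (resp. det zeta).

   For (2), let t = g^-1 gamma gbar.  Then tbar t = gbar^-1 (gammabar gamma) gbar is
   integral, so by (1) gbar^-1 gamma gbar is integral, hence so is x = gbar^-1 g, and
   xbar x = 1.  A Hilbert 90 over O_E gives k in GL_n(O_E) with kbar x = k, which says
   exactly that g k^-1 lies in GL_n(F).  It needs some theta in O_E with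
   theta - sigma(theta) a unit; this exists because E/F is unramified: if sigma were
   trivial on the (finite) residue field, then, p being the residue characteristic,
   the Frobenius powers x^(p^k) together with a uniformizer pi in F would show that
   sigma is trivial modulo every power of pi, hence trivial. *)

Lemma det_mulmx_rect (R : comNzRingType) n m (C : 'M[R]_(n, m)) (N : 'M[R]_(m, n)) :
  \det (C *m N) =
  \sum_(f : {ffun 'I_n -> 'I_m}) (\prod_i C i (f i)) * \det (rowsub f N).
Proof.
rewrite /determinant.
under eq_bigr => s _.
  under eq_bigr => i _ do rewrite mxE.
  rewrite bigA_distr_bigA mulr_sumr.
  under eq_bigr => f _ do rewrite big_split /=.
  over.
rewrite exchange_big /=; apply: eq_bigr => f _.
rewrite mulr_sumr; apply: eq_bigr => s _.
rewrite mulrCA; congr (_ * (_ * _)).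
by apply: eq_bigr => i _; rewrite mxE.
Qed.

Lemma det_conjmx (R : comUnitRingType) n (g A : 'M[R]_n) : g \in unitmx ->
  \det (invmx g *m A *m g) = \det A.
Proof.
by move=> gu; rewrite !det_mulmx det_inv mulrC mulrA mulrV ?mul1r // -unitmxE.
Qed.

Lemma conjmx_pow (F : fieldType) n (g M : 'M[F]_n) i : g \in unitmx ->
  invmx g *m mxpow M i *m g = mxpow (invmx g *m M *m g) i.
Proof.
move=> gu; elim: i => [|i IH] /=; first by rewrite mulmx1 mulVmx.
by rewrite -IH !mulmxA mulmxK.
Qed.

Section Valuation.
Variables (E : fieldType) (v : E -> int).
Hypothesis vM : forall x y : E, x != 0 -> y != 0 -> v (x * y) = v x + v y.
Hypothesis v_ultra : forall x y : E, x != 0 -> y != 0 -> x + y != 0 ->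
  (v x <= v (x + y)) || (v y <= v (x + y)).

Lemma v1 : v 1 = 0.
Proof.
by have := vM (oner_neq0 E) (oner_neq0 E); rewrite mulr1 -[LHS]addr0 => /addrI <-.
Qed.

Lemma vN x : v (- x) = v x.
Proof.
have [->|x0] := eqVneq x 0; first by rewrite oppr0.
have N10 : (-1 : E) != 0 by rewrite oppr_eq0 oner_neq0.
have vN1 : v (-1) = 0 by have := vM N10 N10; rewrite mulrNN mulr1 v1; lia.
by rewrite -mulN1r vM // vN1 add0r.
Qed.

Lemma vV x : x != 0 -> v x^-1 = - v x.
Proof.
by move=> x0; have := vM x0 (invr_neq0 x0); rewrite mulfV // v1; lia.
Qed.

Lemma vX x k : x != 0 -> v (x ^+ k) = v x * k%:Z.
Proof.
move=> x0; elim: k => [|k IH]; first by rewrite expr0 v1 mulr0.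
rewrite exprS vM ?expf_neq0 // IH; lia.
Qed.

Lemma vge0 N : vge v N 0. Proof. by rewrite /vge eqxx. Qed.

Lemma vge1 : vge v 0 1. Proof. by rewrite /vge v1 lexx orbT. Qed.

Lemma vge_le M N x : M <= N -> vge v N x -> vge v M x.
Proof. by rewrite /vge => MN /orP [->//|/(le_trans MN) ->]; rewrite orbT. Qed.

Lemma vgeD N x y : vge v N x -> vge v N y -> vge v N (x + y).
Proof.
rewrite /vge; have [->|x0] /= := eqVneq x 0; first by rewrite add0r.
have [->|y0] /= := eqVneq y 0; first by rewrite addr0 => ->; rewrite orbT.
have [//|xy0] /= := eqVneq (x + y) 0.
by move=> hx hy; case/orP: (v_ultra x0 y0 xy0); [apply: le_trans hx | apply: le_trans hy].
Qed.

Lemma vgeN N x : vge v N (- x) = vge v N x.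
Proof. by rewrite /vge oppr_eq0 vN. Qed.

Lemma vgeB N x y : vge v N x -> vge v N y -> vge v N (x - y).
Proof. by move=> hx hy; rewrite vgeD ?vgeN. Qed.

Lemma vgeM N M x y : vge v N x -> vge v M y -> vge v (N + M) (x * y).
Proof.
rewrite /vge; have [->|x0] /= := eqVneq x 0; first by rewrite mul0r eqxx.
have [->|y0] /= := eqVneq y 0; first by rewrite mulr0 eqxx.
by move=> hx hy; rewrite mulf_eq0 (negPf x0) (negPf y0) vM // lerD.
Qed.

Lemma vgeM0 x y : vge v 0 x -> vge v 0 y -> vge v 0 (x * y).
Proof. by move=> hx hy; rewrite -(addr0 0) vgeM. Qed.

Lemma vgeX N x k : vge v N x -> vge v (N * k%:Z) (x ^+ k).
Proof.
move=> hx; elim: k => [|k IH]; first by rewrite mulr0 expr0 vge1.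
by rewrite exprS (_ : N * k.+1%:Z = N + N * k%:Z) ?vgeM //; lia.
Qed.

Lemma vgeX0 x k : vge v 0 x -> vge v 0 (x ^+ k).
Proof. by move/(vgeX k); rewrite mul0r. Qed.

Lemma vge_nat k : vge v 0 k%:R.
Proof. by elim: k => [|k IH]; rewrite ?vge0 // -addn1 natrD vgeD ?vge1. Qed.

Lemma vge_sum N (I : Type) (r : seq I) (P : pred I) (F : I -> E) :
  (forall i, P i -> vge v N (F i)) -> vge v N (\sum_(i <- r | P i) F i).
Proof. by move=> h; apply: (big_ind (vge v N)) => //; [exact: vge0 | exact: vgeD]. Qed.

Lemma vge_prod (I : Type) (r : seq I) (P : pred I) (F : I -> E) :
  (forall i, P i -> vge v 0 (F i)) -> vge v 0 (\prod_(i <- r | P i) F i).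
Proof. by move=> h; apply: (big_ind (vge v 0)) => //; [exact: vge1 | exact: vgeM0]. Qed.

Lemma vge_sign (b : bool) : vge v 0 ((-1 : E) ^+ b).
Proof. by case: b; rewrite ?expr0 ?expr1 ?vgeN vge1. Qed.

Definition vunit (x : E) := (x != 0) && (v x == 0).

Lemma vunit_vge x : vunit x -> vge v 0 x.
Proof. by case/andP => _ /eqP vx; rewrite /vge vx lexx orbT. Qed.

Lemma vunitM x y : vunit x -> vunit y -> vunit (x * y).
Proof.
case/andP=> x0 /eqP vx /andP [y0 /eqP vy].
by rewrite /vunit mulf_neq0 // vM // vx vy.
Qed.

Lemma vunitV x : vunit x -> vunit x^-1.
Proof. by case/andP=> x0 /eqP vx; rewrite /vunit invr_eq0 x0 vV // vx. Qed.

Lemma vunit_nvge1 x : vge v 0 x -> ~~ vge v 1 x -> vunit x.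
Proof. by rewrite /vunit /vge; case: eqP => //= _; lia. Qed.

Section IntegralMatrices.
Variable n : nat.
Implicit Types A B : 'M[E]_n.

Lemma mxOP A : reflect (forall i j, vge v 0 (A i j)) (mxO v A).
Proof.
apply: (iffP forallP) => [h i j|h i]; first by have /forallP := h i; apply.
by apply/forallP => j; apply: h.
Qed.

Lemma mxO_mul A B : mxO v A -> mxO v B -> mxO v (A *m B).
Proof.
move=> /mxOP hA /mxOP hB; apply/mxOP => i j; rewrite mxE.
by apply: vge_sum => k _; apply: vgeM0.
Qed.

Lemma mxOD A B : mxO v A -> mxO v B -> mxO v (A + B).
Proof. by move=> /mxOP hA /mxOP hB; apply/mxOP => i j; rewrite mxE vgeD. Qed.

Lemma mxOZ c A : vge v 0 c -> mxO v A -> mxO v (c *: A).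
Proof. by move=> hc /mxOP hA; apply/mxOP => i j; rewrite mxE vgeM0. Qed.

Lemma mxO_scalar c : vge v 0 c -> mxO v (c%:M : 'M[E]_n).
Proof.
by move=> hc; apply/mxOP => i j; rewrite mxE; case: (i == j); rewrite ?mulr1n ?vge0.
Qed.

Lemma mxO_pow A i : mxO v A -> mxO v (mxpow A i).
Proof.
move=> hA; elim: i => [|i IH] /=; first exact: mxO_scalar vge1.
exact: mxO_mul.
Qed.

Lemma mxO_sum m (F : 'I_m -> 'M[E]_n) :
  (forall i, mxO v (F i)) -> mxO v (\sum_(i < m) F i).
Proof.
move=> h; apply: (big_ind (fun M : 'M[E]_n => mxO v M)) => //; last exact: mxOD.
by apply/mxOP => i j; rewrite mxE vge0.
Qed.

Lemma mxO_det A : mxO v A -> vge v 0 (\det A).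
Proof.
move=> /mxOP hA; apply: vge_sum => s _.
by apply: vgeM0; [exact: vge_sign | apply: vge_prod => i _].
Qed.

Lemma mxO_adj A : mxO v A -> mxO v (\adj A).
Proof.
move=> /mxOP hA; apply/mxOP => i j; rewrite mxE expand_cofactor.
apply: vge_sum => s _.
by apply: vgeM0; [exact: vge_sign | apply: vge_prod => k _].
Qed.

Lemma GLOE A : GLO v A = mxO v A && vunit (\det A).
Proof.
apply/idP/idP => [/and3P [Au hA hAi] | /andP [hA hd]].
  have d0 : \det A != 0 by rewrite -unitfE -unitmxE.
  have := mxO_det hAi; rewrite det_inv /vge invr_eq0 (negPf d0) vV //= => hi.
  have := mxO_det hA; rewrite /vge (negPf d0) /= => h.
  by rewrite hA /vunit d0 eq_le h -oppr_ge0 hi.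
have Au : A \in unitmx by rewrite unitmxE unitfE; case/andP: hd.
by rewrite /GLO Au hA /invmx Au mxOZ ?mxO_adj // vunit_vge ?vunitV.
Qed.

Lemma GLO_mul A B : GLO v A -> GLO v B -> GLO v (A *m B).
Proof.
by rewrite !GLOE => /andP [hA dA] /andP [hB dB]; rewrite mxO_mul //= det_mulmx vunitM.
Qed.

Lemma GLO_inv A : GLO v A -> GLO v (invmx A).
Proof. by case/and3P => Au hA hAi; rewrite /GLO unitmx_inv Au hAi invmxK. Qed.

Lemma GLO_conj_poly m (M Z g : 'M[E]_n) (c : 'I_m -> E) :
  (forall i, intO v (c i)) -> Z = \sum_(i < m) c i *: mxpow M i ->
  g \in unitmx -> GLO v (invmx g *m M *m g) -> vunit (\det Z) ->
  GLO v (invmx g *m Z *m g).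
Proof.
move=> hc -> gu /and3P [_ hM _] hd; rewrite GLOE det_conjmx // hd andbT.
rewrite mulmx_sumr mulmx_suml; apply: mxO_sum => i.
by rewrite -scalemxAr -scalemxAl conjmx_pow //; apply: mxOZ (hc i) (mxO_pow _ hM).
Qed.

Lemma GLO_left_inverse_minor m (C : 'M[E]_(n, m)) (N : 'M[E]_(m, n)) :
  (forall i j, vge v 0 (C i j)) -> (forall i j, vge v 0 (N i j)) ->
  C *m N = 1%:M -> exists f : {ffun 'I_n -> 'I_m}, GLO v (rowsub f N).
Proof.
move=> hC hN hCN.
have minorO f : mxO v (rowsub f N) by apply/mxOP => i j; rewrite mxE.
suff [f hf] : exists f : {ffun 'I_n -> 'I_m}, ~~ vge v 1 (\det (rowsub f N)).
  by exists f; rewrite GLOE minorO vunit_nvge1 ?mxO_det.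
apply/existsP; apply: contraT => /existsPn hdet.
have : vge v 1 (1 : E).
  rewrite -(det1 E n) -hCN det_mulmx_rect; apply: vge_sum => f _.
  by rewrite -(add0r 1); apply: vgeM; [apply: vge_prod | rewrite -[vge _ _ _]negbK].
by rewrite /vge oner_eq0 v1.
Qed.

End IntegralMatrices.

Definition res_eq (x y : E) := vge v 1 (x - y).

Lemma res_eq_sym x y : res_eq x y -> res_eq y x.
Proof. by rewrite /res_eq -vgeN opprB. Qed.

Lemma res_eq_trans x y z : res_eq x y -> res_eq y z -> res_eq x z.
Proof. by move=> hxy /(vgeD hxy); rewrite addrA subrK. Qed.

Lemma res_eqX x y k : vge v 0 x -> vge v 0 y -> res_eq x y -> res_eq (x ^+ k) (y ^+ k).
Proof.
move=> x0 y0 hxy; rewrite /res_eq subrXX -(addr0 1) vgeM //.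
by apply: vge_sum => i _; rewrite vgeM0 ?vgeX0.
Qed.

Lemma vge1_mul x y : vge v 0 x -> vge v 0 y -> vge v 1 (x * y) ->
  vge v 1 x || vge v 1 y.
Proof.
rewrite /vge; have [->|x0] /= := eqVneq x 0; first by [].
have [->|y0] /= := eqVneq y 0; first by rewrite orbT.
by rewrite mulf_eq0 (negPf x0) (negPf y0) vM //; lia.
Qed.

Section FiniteResidueField.
Variable s : seq E.
Hypothesis res_s : forall x, intO v x -> exists2 y, y \in s & intO v y && vge v 1 (x - y).

Lemma res_pigeonhole (a : nat -> E) : (forall i, vge v 0 (a i)) ->
  exists i j, (i < j)%N /\ res_eq (a i) (a j).
Proof.
move=> a0; pose P i := fun y => intO v y && vge v 1 (a i - y).
have has_rep i : has (P i) s.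
  by have [y ys hy] := res_s (a0 i); apply/hasP; exists y.
have rep_res i : res_eq (a i) (nth 0 s (find (P i) s)).
  by have /andP [] := nth_find 0 (has_rep i).
have rep_lt i : (find (P i) s < size s)%N by rewrite -has_find.
pose f (i : 'I_(size s).+1) : 'I_(size s) := Ordinal (rep_lt i).
have [i [j ij fij]] : exists i, exists2 j, i != j & f i = f j.
  apply/injectivePn; apply/negP => /injectiveP /leq_card.
  by rewrite !card_ord ltnn.
have hij : res_eq (a i) (a j).
  apply: res_eq_trans (rep_res i) _; apply: res_eq_sym.
  by have /(congr1 val) /= -> := fij; apply: rep_res.
case: (ltngtP i j) => [lt | gt | eq]; first by exists i, j.
  by exists j, i; split => //; apply: res_eq_sym.
by move: ij; rewrite -val_eqE /= eq eqxx.
Qed.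

Lemma residue_char : exists2 p, prime p & vge v 1 p%:R.
Proof.
have [i [j [ij hij]]] := res_pigeonhole (fun k => vge_nat k).
have ex : exists N, (0 < N)%N && vge v 1 N%:R.
  exists (j - i)%N; rewrite subn_gt0 ij /=.
  by move: hij; rewrite /res_eq -vgeN opprB -natrB // ltnW.
case: (ex_minnP ex) => N /andP [N0 hN] Nmin.
have N1 : (1 < N)%N.
  by case: N N0 hN {Nmin} => [|[|]] //; rewrite /vge oner_eq0 v1.
have q_gt0 : (0 < N %/ pdiv N)%N by rewrite divn_gt0 ?pdiv_gt0 ?pdiv_leq.
exists (pdiv N); first exact: pdiv_prime.
move: hN; rewrite -{1}(divnK (pdiv_dvd N)) natrM.
move/(vge1_mul (vge_nat _) (vge_nat _)) => /orP [hq | //].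
have := Nmin _ (introT andP (conj q_gt0 hq)).
by rewrite leqNgt ltn_Pdiv ?prime_gt1 ?pdiv_prime.
Qed.

Section Frobenius.
Variable p : nat.
Hypothesis p_prime : prime p.
Hypothesis p_res : vge v 1 p%:R.

Lemma binomial_congr (y d : E) (m : nat) : vge v 0 y -> vge v m%:Z d ->
  vge v m.+1%:Z ((y + d) ^+ p - y ^+ p - d ^+ p).
Proof.
move=> y0 dm; have d0 : vge v 0 d by apply: vge_le dm.
have [q p_eq] : exists q, p = q.+1 by exists p.-1; rewrite prednK ?prime_gt0.
rewrite p_eq exprDn big_ord_recr big_ord_recl /= !subnn expr0 subn0 !binn.
have drop_ends (a S b : E) : a + S + b - a - b = S by ring.
rewrite mulr1 mul1r !mulr1n drop_ends.
apply: vge_sum => i _; rewrite -mulr_natr (_ : m.+1%:Z = m%:Z + 0 + 1); last lia.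
apply: vgeM; last first.
  have /dvdnP [c ->] : (q.+1 %| 'C(q.+1, bump 0 i))%N.
    by rewrite -p_eq prime_dvd_bin // p_eq /bump /= add1n ltnS ltn_ord.
  by rewrite natrM -(add0r 1) vgeM ?vge_nat -?p_eq.
by rewrite mulrC vgeM ?vgeX0 // /bump /= add1n exprS -(addr0 m%:Z) vgeM ?vgeX0.
Qed.

Lemma frob_inj x y : vge v 0 x -> vge v 0 y ->
  res_eq (x ^+ p) (y ^+ p) -> res_eq x y.
Proof.
move=> x0 y0 hxy; rewrite /res_eq; set d := x - y.
have d0 : vge v 0 d by apply: vgeB.
have dp : vge v 1 (d ^+ p).
  have := binomial_congr (m := 0) y0 d0; rewrite [y + d]addrC subrK => h.
  have -> : d ^+ p = (x ^+ p - y ^+ p) - ((x ^+ p - y ^+ p) - d ^+ p) by ring.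
  exact: vgeB.
have [->|dn0] := eqVneq d 0; first exact: vge0.
move: d0 dp; rewrite /vge expf_eq0 (negPf dn0) andbF /= vX //.
by have := prime_gt1 p_prime; nia.
Qed.

Lemma frobX_inj x y i : vge v 0 x -> vge v 0 y ->
  res_eq (x ^+ (p ^ i)) (y ^+ (p ^ i)) -> res_eq x y.
Proof.
move=> x0 y0; elim: i => [|i IH]; first by rewrite expn0 !expr1.
by rewrite expnSr !exprM => /(frob_inj (vgeX0 _ x0) (vgeX0 _ y0)) /IH.
Qed.

Lemma frob_period x : vge v 0 x -> exists2 d, (0 < d)%N & res_eq x (x ^+ (p ^ d)).
Proof.
move=> x0; have [i [j [ij hij]]] := res_pigeonhole (fun k => vgeX0 (p ^ k) x0).
exists (j - i)%N; first by rewrite subn_gt0.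
apply: (frobX_inj (i := i)); rewrite ?vgeX0 //.
by rewrite -exprM -expnD subnK // ltnW.
Qed.

Lemma frob_period_mul x d k : vge v 0 x -> res_eq x (x ^+ (p ^ d)) ->
  res_eq x (x ^+ (p ^ (d * k))).
Proof.
move=> x0 hd; elim: k => [|k IH]; first by rewrite muln0 expn0 expr1 /res_eq subrr vge0.
rewrite mulnS expnD mulnC exprM.
by apply: res_eq_trans hd _; apply: res_eqX; rewrite ?vgeX0.
Qed.

End Frobenius.
End FiniteResidueField.

Section Involution.
Variable sigma : {rmorphism E -> E}.
Hypothesis sigmaK : involutive sigma.
Hypothesis v_sigma : forall x, v (sigma x) = v x.

Lemma vge_sigma N x : vge v N (sigma x) = vge v N x.
Proof. by rewrite /vge fmorph_eq0 v_sigma. Qed.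

Lemma vunit_norm d : vunit (sigma d * d) -> vunit d.
Proof.
have [->|d0] := eqVneq d 0; first by rewrite mulr0 /vunit eqxx.
by case/andP=> _ /eqP; rewrite vM ?fmorph_eq0 // v_sigma /vunit d0 => h; apply/eqP; lia.
Qed.

Section Unramified.
Variables (s : seq E) (pi : E).
Hypothesis res_s : forall x, intO v x -> exists2 y, y \in s & intO v y && vge v 1 (x - y).
Hypotheses (pi0 : pi != 0) (v_pi : v pi = 1) (sigma_pi : sigma pi = pi).

Section TrivialOnResidues.
Variable p : nat.
Hypotheses (p_prime : prime p) (p_res : vge v 1 p%:R).
Hypothesis sigma_res : forall y, vge v 0 y -> res_eq y (sigma y).

Lemma frob_sigma_step x (m : nat) : (0 < m)%N -> vge v 0 x ->
  vge v m%:Z (x - sigma x) -> vge v m.+1%:Z (x ^+ p - sigma (x ^+ p)).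
Proof.
move=> m0 x0 hm; set d := sigma x - x.
have dm : vge v m%:Z d by rewrite /d -vgeN opprB.
rewrite rmorphXn (_ : sigma x = x + d); last by rewrite /d addrC subrK.
have -> : x ^+ p - (x + d) ^+ p = - (((x + d) ^+ p - x ^+ p - d ^+ p) + d ^+ p) by ring.
rewrite vgeN vgeD ?binomial_congr //.
apply: (vge_le (N := m%:Z * p%:Z)); last exact: vgeX.
by have := prime_gt1 p_prime; nia.
Qed.

Lemma frob_sigma_congr x k : vge v 0 x ->
  vge v k.+1%:Z (x ^+ (p ^ k) - sigma (x ^+ (p ^ k))).
Proof.
move=> x0; elim: k => [|k IH]; first by rewrite expn0 expr1; apply: sigma_res.
by rewrite expnSr exprM frob_sigma_step ?vgeX0.
Qed.

Lemma sigma_congr_all m x : vge v 0 x -> vge v m.+1%:Z (x - sigma x).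
Proof.
(* [x] is congruent to a Frobenius power [w] that is sigma-fixed to higher order, and
   [x = w + pi z] with [sigma pi = pi] lets the induction hypothesis act on [z]. *)
elim: m x => [|m IH] x x0; first exact: sigma_res.
have [d d0 hd] := frob_period res_s p_prime p_res x0.
set w := x ^+ (p ^ (d * m.+1)).
have hw : vge v m.+2%:Z (w - sigma w).
  by apply: vge_le (frob_sigma_congr _ x0); nia.
set z := (x - w) / pi.
have z0 : vge v 0 z.
  rewrite /z -(subrr 1) vgeM //; first exact: frob_period_mul _ x0 hd.
  by rewrite /vge invr_eq0 (negPf pi0) vV // v_pi.
have -> : x = w + pi * z by rewrite /z mulrC mulfVK // addrC subrK.
rewrite rmorphD rmorphM sigma_pi.
have -> : w + pi * z - (sigma w + pi * sigma z)
  = (w - sigma w) + pi * (z - sigma z) by ring.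
rewrite vgeD // (_ : m.+2%:Z = 1 + m.+1%:Z) ?vgeM ?IH //.
by rewrite /vge (negPf pi0) v_pi.
Qed.

End TrivialOnResidues.

Lemma exists_res_nonfixed : (exists x, sigma x != x) ->
  exists2 th, vge v 0 th & vunit (th - sigma th).
Proof.
case=> x hx; case: (classic (exists2 th, vge v 0 th & vunit (th - sigma th))) => // no_th.
have [p p_prime p_res] := residue_char res_s.
have sigma_res y : vge v 0 y -> res_eq y (sigma y).
  move=> y0; apply: contraT => hy; case: no_th; exists y => //.
  by apply: vunit_nvge1 hy; rewrite vgeB ?vge_sigma.
have [y y0 hy] : exists2 y, vge v 0 y & sigma y != y.
  have [x0 | /norP [xn0 vx]] := boolP (vge v 0 x); first by exists x.
  exists x^-1; last by rewrite fmorphV (inj_eq invr_inj).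
  by rewrite /vge invr_eq0 (negPf xn0) vV //; lia.
have D0 : y - sigma y != 0 by rewrite subr_eq0 eq_sym.
have := sigma_congr_all p_prime p_res sigma_res `|v (y - sigma y)|%N y0.
have : vge v 0 (y - sigma y) by rewrite vgeB ?vge_sigma.
by rewrite /vge (negPf D0) /=; lia.
Qed.

End Unramified.

Section BarMatrices.
Variable n : nat.
Implicit Types A : 'M[E]_n.

Lemma mxbarK : involutive (@mxbar E sigma n).
Proof. by move=> A; apply/matrixP => i j; rewrite !mxE sigmaK. Qed.

Lemma unitmx_bar A : (mxbar sigma A \in unitmx) = (A \in unitmx).
Proof. by rewrite !unitmxE !unitfE det_map_mx fmorph_eq0. Qed.

Lemma GLO_bar A : GLO v (mxbar sigma A) = GLO v A.
Proof.
have mxO_bar : mxO v (mxbar sigma A) = mxO v A.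
  by apply/mxOP/mxOP => h i j; have := h i j; rewrite /mxbar ?mxE vge_sigma.
by rewrite !GLOE mxO_bar det_map_mx /vunit fmorph_eq0 v_sigma.
Qed.

Lemma kottwitz_integral (gamma g : 'M[E]_n) : kottwitz sigma v gamma -> g \in unitmx ->
  GLO v (invmx g *m (mxbar sigma gamma *m gamma) *m g) ->
  GLO v (invmx g *m gamma *m g).
Proof.
case=> [[c [hc hz]] gu hM | hno gu hM]; last by case: hno; exists g.
apply: (GLO_conj_poly hc hz gu hM); apply: vunit_norm.
by move: hM; rewrite GLOE det_conjmx // det_mulmx det_map_mx => /andP [].
Qed.

Lemma kottwitz_wrt_integral (beta zeta h : 'M[E]_n) : beta \in unitmx ->
  kottwitz_wrt sigma v beta zeta -> unitary_grp sigma beta h ->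
  GLO v (invmx h *m (invmx beta *m mxadj sigma zeta *m beta *m zeta) *m h) ->
  GLO v (invmx h *m zeta *m h).
Proof.
move=> bu; case=> [[c [hc hz]] /andP [hu _] hM | hno hh hM]; last by case: hno; exists h.
apply: (GLO_conj_poly hc hz hu hM); apply: vunit_norm.
have b0 : \det beta != 0 by rewrite -unitfE -unitmxE.
move: hM; rewrite GLOE det_conjmx // !det_mulmx det_inv det_tr det_map_mx.
have -> : (\det beta)^-1 * sigma (\det zeta) * \det beta * \det zeta
  = sigma (\det zeta) * \det zeta by field.
by case/andP.
Qed.

Lemma hilbert90_GLO (x : 'M[E]_n) (th : E) :
  mxO v x -> mxbar sigma x *m x = 1%:M -> vge v 0 th -> vunit (th - sigma th) ->
  exists2 k : 'M[E]_n, GLO v k & mxbar sigma k *m x = k.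
Proof.
move=> xO xbarx th0 dth.
(* [N] is fixed by [A |-> Abar x] and has the integral left inverse [C], so one of
   its n x n minors lies in GL_n(O_E). *)
pose N := col_mx (1%:M + x) (th%:M + sigma th *: x).
have Nx : map_mx sigma N *m x = N.
  rewrite map_col_mx mul_col_mx !map_mxD map_mxZ map_mx1 map_scalar_mx sigmaK.
  rewrite !mulmxDl mul1mx -scalemxAl xbarx mul_scalar_mx scalemx1.
  by rewrite [x + _]addrC [_ *: x + _]addrC.
pose C := row_mx ((sigma th / (sigma th - th))%:M : 'M[E]_n) (- (sigma th - th)^-1)%:M.
have CN : C *m N = 1%:M.
  have dth0 : sigma th - th != 0 by rewrite -oppr_eq0 opprB; case/andP: dth.
  rewrite mul_row_col !mul_scalar_mx; apply/matrixP => i j; rewrite !mxE.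
  by case: (i == j); rewrite ?mulr1n ?mulr0n; field.
have vgeC : vge v 0 (sigma th - th)^-1.
  by apply/vunit_vge/vunitV; rewrite -opprB /vunit oppr_eq0 vN.
have [f kO] : exists f : {ffun 'I_n -> 'I_(n + n)}, GLO v (rowsub f N).
  apply: (GLO_left_inverse_minor (C := C)) => //.
  - move=> i j; rewrite /C -(splitK j); case: (split j) => k /=;
      rewrite ?row_mxEl ?row_mxEr mxE; case: (i == k); rewrite ?mulr1n ?mulr0n ?vge0 //.
    + by rewrite vgeM0 ?vge_sigma.
    + by rewrite vgeN.
  - move/mxOP: xO => xO i j; rewrite -(splitK i); case: (split i) => k /=;
      rewrite ?col_mxEu ?col_mxEd !mxE ?vgeD ?vgeM0 ?vge_sigma //;
      by case: (k == j); rewrite ?mulr1n ?mulr0n ?vge0 ?vge1.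
exists (rowsub f N) => //; apply/matrixP => i j.
by rewrite -[in RHS]Nx !mxE; apply: eq_bigr => l _; rewrite !mxE.
Qed.

Lemma GLF_mul_invmx (g k : 'M[E]_n) : g \in unitmx -> k \in unitmx ->
  mxbar sigma k *m (invmx (mxbar sigma g) *m g) = k -> GLF sigma (g *m invmx k).
Proof.
move=> gu ku kx; rewrite /GLF unitmx_mul gu unitmx_inv ku /=.
have kbar_inv : invmx (mxbar sigma k) = invmx (mxbar sigma g) *m g *m invmx k.
  have e : mxbar sigma k *m (invmx (mxbar sigma g) *m g *m invmx k) = 1%:M.
    by rewrite mulmxA kx mulmxV.
  by rewrite -[LHS]mulmx1 -e mulmxA mulVmx ?unitmx_bar // mul1mx.
rewrite /mxbar map_mxM map_invmx -/(mxbar _ _) kbar_inv !mulmxA.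
by rewrite mulmxV ?unitmx_bar // mul1mx.
Qed.

Lemma GLF_GLO_decomposition (gamma g : 'M[E]_n) (th : E) :
  vge v 0 th -> vunit (th - sigma th) -> kottwitz sigma v gamma ->
  g \in unitmx -> GLO v (invmx g *m gamma *m mxbar sigma g) ->
  exists a k : 'M[E]_n, [/\ GLF sigma a, GLO v k & g = a *m k].
Proof.
move=> th0 dth hk gu tO; set gb := mxbar sigma g; set t := invmx g *m gamma *m gb.
have gbu : gb \in unitmx by rewrite unitmx_bar.
have tu : t \in unitmx by case/and3P: tO.
have normO : GLO v (invmx gb *m (mxbar sigma gamma *m gamma) *m gb).
  have -> : invmx gb *m (mxbar sigma gamma *m gamma) *m gb = mxbar sigma t *m t.
    by rewrite /t /mxbar !map_mxM map_invmx -!/(mxbar _ _) mxbarK !mulmxA mulmxK.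
  by rewrite GLO_mul ?GLO_bar.
have gammaO := kottwitz_integral hk gbu normO.
set x := invmx gb *m g.
have xO : mxO v x.
  have -> : x = (x *m t) *m invmx t by rewrite mulmxK.
  have -> : x *m t = invmx gb *m gamma *m gb by rewrite /x /t !mulmxA mulmxK.
  by case/and3P: (GLO_mul gammaO (GLO_inv tO)).
have xbarx : mxbar sigma x *m x = 1%:M.
  by rewrite /x /mxbar map_mxM map_invmx -!/(mxbar _ _) mxbarK mulmxA mulmxK // mulVmx.
have [k kO kx] := hilbert90_GLO xO xbarx th0 dth.
have ku : k \in unitmx by case/and3P: kO.
by exists (g *m invmx k), k; rewrite GLF_mul_invmx // mulmxKV.
Qed.
End BarMatrices.
End Involution.
End Valuation.

Theorem mainTheorem8 (E : fieldType) (sigma : {rmorphism E -> E})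
    (v : E -> int) (n : nat) (beta gamma zeta : 'M[E]_n) :
  unram_quad_local sigma v ->
  beta \in unitmx -> mxadj sigma beta = - beta ->
  gamma \in unitmx -> normal_mx sigma gamma -> kottwitz sigma v gamma ->
  regular_semisimple (mxbar sigma gamma *m gamma) ->
  zeta \in unitmx -> kottwitz_wrt sigma v beta zeta ->
  (forall g : 'M[E]_n, g \in unitmx ->
     GLO v (invmx g *m (mxbar sigma gamma *m gamma) *m g) ->
     GLO v (invmx g *m gamma *m g))
  /\ (forall g : 'M[E]_n, g \in unitmx ->
     GLO v (invmx g *m gamma *m mxbar sigma g) ->
     exists a k : 'M[E]_n, [/\ GLF sigma a, GLO v k & g = a *m k])
  /\ (forall h : 'M[E]_n, unitary_grp sigma beta h ->
     GLO v (invmx h *m (invmx beta *m mxadj sigma zeta *m beta *m zeta) *m h) ->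
     GLO v (invmx h *m zeta *m h)).
Proof.
move=> [[_ vM v_ultra _ [s res_s]] [sigmaK nontriv v_sigma [pi [pi0 v_pi sigma_pi]]]].
move=> beta_u _ _ _ gamma_k _ _ zeta_k.
have [th th0 dth] :=
  exists_res_nonfixed vM v_ultra v_sigma res_s pi0 v_pi sigma_pi nontriv.
split; [|split].
- by move=> g; apply: kottwitz_integral.
- by move=> g; apply: GLF_GLO_decomposition th0 dth gamma_k.
- by move=> h; apply: kottwitz_wrt_integral.
Qed.
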